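(* Fix $t>1$. For $n=1,2,\ldots$ let $a_n=1^{t^n}\cdot2^{t^{n-1}}\cdot3^{t^{n-2}}\cdots n^{t^1}$. Then $$\lim_{n\to\infty}a_n^{1/t^n}=\sigma_t^{\,t}<\infty,$$ where $\sigma_t=\prod_{n=1}^\infty n^{1/t^n}$. Moreover, with $$b_n=\sqrt[t]{a_1+\sqrt[t]{a_2+\cdots+\sqrt[t]{a_{n-1}+\sqrt[t]{a_n}}}},\qquad B_n=\sqrt[t]{1+2\sqrt[t]{1+3\sqrt[t]{1+\cdots+(n-1)\sqrt[t]{1+n\sqrt[t]{1}}}}},$$ both sequences $(b_n)_{n\ge1}$ and $(B_n)_{n\ge1}$ converge, and $\lim_{n\to\infty}b_n=\lim_{n\to\infty}B_n$.
   Context: For $a\ge0$ and $t>0$, $\sqrt[t]{a}=a^{1/t}\ge0$ denotes the nonnegative root. *)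

From HB Require Import structures.
From mathcomp Require Import all_boot all_order all_algebra.
From mathcomp Require Import all_classical all_reals all_analysis.
Set Implicit Arguments. Unset Strict Implicit. Unset Printing Implicit Defensive.
Import Order.TTheory GRing.Theory Num.Theory.
Local Open Scope ring_scope.

Section Defs.
Variables (R : realType) (t : R).

Definition aseq (n : nat) : R :=
  \prod_(1 <= k < n.+1) ((k%:R : R) `^ (t ^+ (n - k).+1)).

Definition sigma_partial (N : nat) : R :=
  \prod_(1 <= k < N.+1) ((k%:R : R) `^ (t ^+ k)^-1).

Fixpoint nest (c : nat -> R) (k m : nat) : R :=
  match m with
  | 0 => 0
  | m'.+1 => (c k + nest c k.+1 m') `^ t^-1
  end.

Definition b_seq (n : nat) : R := nest aseq 1 n.

Fixpoint nestB (k m : nat) : R :=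
  match m with
  | 0 => 1 `^ t^-1
  | m'.+1 => (1 + (k.+1)%:R * nestB k.+1 m') `^ t^-1
  end.

(* B_n = (1 + 2 (1 + 3 ( ... (1 + n (1)^(1/t))^(1/t) ...)^(1/t))^(1/t), n >= 1 *)
Definition B_seq (n : nat) : R := nestB 1 n.-1.

End Defs.

(** The normalized terms of [a] are exactly powers of the partial products of
    [sigma_t]: [a_n^(1/t^n) = (prod_(k <= n) k^(1/t^k))^t], and these partial
    products are bounded because [k^(1/t^k) <= 2^(k/t^k)] and [sum k/t^k] is
    finite.  The recursion [a_(k+1) = (a_k (k+1))^t] lets one pull
    [a_k^(1/t)] out of every radical of [b_n], so [b_n = a_1^(1/t) B_n = B_n].
    Finally [b_n] increases, and since [a_k <= L^(t^k)] with [L = sigma_t^t],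
    a radical starting at [a_k] is bounded by [C L^(t^(k-1))] for any
    [C >= 0] with [1 + C <= C^t]. *)
From HB Require Import structures.
From mathcomp Require Import all_boot all_order all_algebra.
From mathcomp Require Import all_classical all_reals all_analysis.
From mathcomp Require Import ring lra.
Import Order.TTheory GRing.Theory Num.Theory.
Import numFieldNormedType.Exports.
Local Open Scope classical_set_scope.
Local Open Scope ring_scope.

Section PowR.
Context {R : realType}.
Implicit Types x y e : R.

Lemma ler_powR2r x y e : 0 <= e -> 0 <= x -> x <= y -> x `^ e <= y `^ e.
Proof.
move=> e0 x0 xy.
by apply: ge0_ler_powR; rewrite ?nnegrE // (le_trans x0 xy).
Qed.

Lemma powR_le_of_powRV x y e : 0 < e -> 0 <= x -> x `^ e^-1 <= y -> x <= y `^ e.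
Proof.
move=> e0 x0 xy; rewrite -[x]powRr1 // -(mulVf (lt0r_neq0 e0)) powRrM.
exact: ler_powR2r (ltW e0) (powR_ge0 _ _) xy.
Qed.

Lemma powRK x e : e != 0 -> 0 <= x -> (x `^ e) `^ e^-1 = x.
Proof. by move=> e0 x0; rewrite -powRrM mulfV // powRr1. Qed.

Lemma powR_nat_ge1 (k : nat) e : (1 <= k)%N -> 0 <= e -> 1 <= (k%:R : R) `^ e.
Proof.
by move=> k1 e0; rewrite -{1}(powRr0 (k%:R : R)); apply: ler_powR; rewrite ?ler1n.
Qed.

Lemma powR_prod (I : Type) (s : seq I) (P : pred I) (F : I -> R) e :
  (forall i, 0 <= F i) ->
  (\prod_(i <- s | P i) F i) `^ e = \prod_(i <- s | P i) F i `^ e.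
Proof.
move=> F0.
suff [] : 0 <= \prod_(i <- s | P i) F i /\
  (\prod_(i <- s | P i) F i) `^ e = \prod_(i <- s | P i) F i `^ e by [].
apply: (big_ind2 (fun x y => 0 <= x /\ x `^ e = y)) => //.
- by rewrite powR1.
- by move=> x1 x2 y1 y2 [x1_ge0 <-] [x2_ge0 <-]; rewrite mulr_ge0 ?powRM.
Qed.

Lemma prod_powR_sum (I : Type) (s : seq I) (P : pred I) (F : I -> R) x :
  0 < x -> \prod_(i <- s | P i) x `^ F i = x `^ (\sum_(i <- s | P i) F i).
Proof.
move=> x0; apply: (big_ind2 (fun y e => y = x `^ e)) => //.
- by rewrite powRr0.
- by move=> y1 y2 e1 e2 -> ->; rewrite powRD // lt0r_neq0 ?implybT.
Qed.

Lemma powR_continuous e x : 0 < x -> {for x, continuous (fun y : R => y `^ e)}.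
Proof.
move=> x0; apply: differentiable_continuous; apply/derivable1_diffP.
by apply: derivable_powR; rewrite in_itv /= x0.
Qed.

Lemma sum_nat_mul_expr (r : R) N : r != 1 ->
  \sum_(1 <= k < N.+1) k%:R * r ^+ k =
  (r - N.+1%:R * r ^+ N.+1 + N%:R * r ^+ N.+2) / (1 - r) ^+ 2.
Proof.
move=> r1; have r1' : 1 - r != 0 by rewrite subr_eq0 eq_sym.
elim: N => [|N IH]; first by rewrite big_geq // mul0r addr0 mul1r subrr mul0r.
by rewrite big_nat_recr //= IH -!natr1 !exprS expr0; field.
Qed.

Lemma sum_nat_mul_expr_le (r : R) N : 0 < r < 1 ->
  \sum_(1 <= k < N.+1) k%:R * r ^+ k <= r / (1 - r) ^+ 2.
Proof.
case/andP=> r0 r1; rewrite sum_nat_mul_expr ?lt_eqF //.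
rewrite ler_pM2r ?invr_gt0 ?exprn_gt0 ?subr_gt0 // -addrA gerDl !exprS.
have rN_ge0 : 0 <= r ^+ N by rewrite exprn_ge0 // ltW.
have N_ge0 : 0 <= N%:R :> R by [].
have : 0 <= (r * r ^+ N) * (N%:R * (1 - r) + 1).
  by apply: mulr_ge0; [rewrite mulr_ge0 // ltW | nra].
rewrite -natr1; nra.
Qed.

End PowR.

Section NestedRadicals.
Context {R : realType} {t : R}.
Hypothesis t_gt1 : 1 < t.

Let t_gt0 : 0 < t. Proof. exact: lt_trans t_gt1. Qed.
Let t_neq0 : t != 0. Proof. exact: lt0r_neq0. Qed.

Lemma nest_ge0 c k m : 0 <= nest t c k m.
Proof. by case: m => [|m] //=; apply: powR_ge0. Qed.

Lemma nest_nondecreasing c k :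
  (forall k, 0 <= c k) -> nondecreasing_seq (nest t c k).
Proof.
move=> c_ge0; apply/nondecreasing_seqP => m; elim: m k => [|m IH] k.
  exact: powR_ge0.
apply: ler_powR2r; first by rewrite invr_ge0 ltW.
  by rewrite addr_ge0 ?nest_ge0.
by rewrite lerD2l IH.
Qed.

Lemma exists_radical_bound : exists2 C : R, 0 <= C & 1 + C <= C `^ t.
Proof.
set C := (2 : R) `^ (t - 1)^-1.
have C_ge1 : 1 <= C by apply: powR_nat_ge1; rewrite // invr_ge0 subr_ge0 ltW.
have C_tm1 : C `^ (t - 1) = 2.
  by rewrite -powRrM mulVf ?powRr1 // subr_eq0 gt_eqF.
exists C; first exact: le_trans C_ge1.
rewrite -mulr_powRB1 ?(le_trans _ C_ge1) // C_tm1; lra.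
Qed.

(* The bound [C M^(t^(k-1))] is stable under [x |-> (M^(t^k) + x)^(1/t)]
   exactly because [(1 + C)^(1/t) <= C]. *)
Lemma nest_le_powR (c : nat -> R) M (C : R) k m :
  (forall k, 0 <= c k <= M `^ (t ^+ k)) -> 0 <= C -> 1 + C <= C `^ t ->
  nest t c k m <= C * M `^ (t ^+ k / t).
Proof.
move=> cM C_ge0 C_rad; elim: m k => [|m IH] k /=.
  by rewrite mulr_ge0 ?powR_ge0.
have [ck_ge0 ck_le] := andP (cM k).
have Mk_ge0 : 0 <= M `^ (t ^+ k) by apply: powR_ge0.
have t1_ge0 : 0 <= t^-1 by rewrite invr_ge0 ltW.
apply: (@le_trans _ _ (((1 + C) * M `^ (t ^+ k)) `^ t^-1)).
  apply: ler_powR2r; rewrite ?addr_ge0 ?nest_ge0 //.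
  rewrite mulrDl mul1r lerD //.
  by rewrite -[t ^+ k](mulfK t_neq0) -exprSr IH.
rewrite powRM ?addr_ge0 // -powRrM ler_wpM2r ?powR_ge0 //.
rewrite -[C in _ <= C](powRK _ _ t_neq0 C_ge0).
by rewrite ler_powR2r ?addr_ge0.
Qed.

Lemma nest_cvg c M k :
  (forall k, 0 <= c k <= M `^ (t ^+ k)) -> cvgn (nest t c k).
Proof.
move=> cM; have [C C_ge0 C_rad] := exists_radical_bound.
apply: nondecreasing_is_cvgn.
  by apply: nest_nondecreasing => j; case/andP: (cM j).
by exists (C * M `^ (t ^+ k / t)) => _ [m _ <-]; apply: nest_le_powR.
Qed.

End NestedRadicals.

Section SigmaPartial.
Context {R : realType} {t : R}.
Hypothesis t_gt1 : 1 < t.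

Let t_gt0 : 0 < t. Proof. exact: lt_trans t_gt1. Qed.

Let sigma_factor_ge1 k : (1 <= k)%N -> 1 <= (k%:R : R) `^ (t ^+ k)^-1.
Proof. by move=> k1; rewrite powR_nat_ge1 // invr_ge0 exprn_ge0 // ltW. Qed.

Lemma sigma_partial_ge1 N : 1 <= sigma_partial t N.
Proof.
rewrite /sigma_partial big_nat_cond; apply: (big_ind (fun x => 1 <= x)) => //.
  by move=> x y; apply: mulr_ege1.
by move=> k /andP[/andP[k1 _] _]; apply: sigma_factor_ge1.
Qed.

Lemma sigma_partial_nondecreasing : nondecreasing_seq (sigma_partial t).
Proof.
apply/nondecreasing_seqP => n; rewrite /sigma_partial [in leRHS]big_nat_recr //=.
by rewrite ler_peMr ?sigma_factor_ge1 // (le_trans _ (sigma_partial_ge1 n)).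
Qed.

Lemma sigma_partial_le N :
  sigma_partial t N <= 2 `^ (t^-1 / (1 - t^-1) ^+ 2).
Proof.
have r_gt0 : 0 < t^-1 by rewrite invr_gt0.
apply: (@le_trans _ _ (\prod_(1 <= k < N.+1) 2 `^ (k%:R * t^-1 ^+ k))).
  apply: ler_prod => k _; rewrite powR_ge0 /= powRrM powR_mulrn // exprVn.
  apply: ler_powR2r => //; first by rewrite invr_ge0 exprn_ge0 // ltW.
  by rewrite -natrX ler_nat ltnW // ltn_expl.
rewrite prod_powR_sum // ler_powR ?ler1n // sum_nat_mul_expr_le //.
by rewrite r_gt0 invf_lt1.
Qed.

Lemma sigma_partial_cvg : cvgn (sigma_partial t).
Proof.
apply: nondecreasing_is_cvgn; first exact: sigma_partial_nondecreasing.
by exists (2 `^ (t^-1 / (1 - t^-1) ^+ 2)) => _ [n _ <-]; apply: sigma_partial_le.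
Qed.

Lemma sigma_partial_le_lim n : sigma_partial t n <= limn (sigma_partial t).
Proof.
exact: nondecreasing_cvgn_le sigma_partial_nondecreasing sigma_partial_cvg n.
Qed.

Lemma lim_sigma_partial_ge1 : 1 <= limn (sigma_partial t).
Proof. exact: le_trans (sigma_partial_ge1 0) (sigma_partial_le_lim 0). Qed.

End SigmaPartial.

Section Aseq.
Context {R : realType} {t : R}.

Lemma aseq_ge0 n : 0 <= aseq t n.
Proof. by apply: prodr_ge0 => k _; apply: powR_ge0. Qed.

Lemma aseqS k : aseq t k.+1 = (aseq t k * k.+1%:R) `^ t.
Proof.
rewrite powRM ?aseq_ge0 // /aseq powR_prod => [|j]; last exact: powR_ge0.
rewrite big_nat_recr //= subnn expr1; congr (_ * _).
by apply: eq_big_nat => j /andP[_ jk]; rewrite -powRrM -exprSr subSn.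
Qed.

Hypothesis t_gt1 : 1 < t.

Let t_gt0 : 0 < t. Proof. exact: lt_trans t_gt1. Qed.
Let t_neq0 : t != 0. Proof. exact: lt0r_neq0. Qed.

Lemma aseq_powRV n : aseq t n `^ (t ^+ n)^-1 = sigma_partial t n `^ t.
Proof.
rewrite /aseq /sigma_partial !powR_prod; try by move=> k; apply: powR_ge0.
apply: eq_big_nat => j /andP[_]; rewrite ltnS => jn.
rewrite -!powRrM; congr (_ `^ _).
have -> : t ^+ (n - j).+1 = t ^+ n.+1 / t ^+ j.
  by rewrite -{2}(subnK jn) -addSn exprD mulfK ?expf_neq0.
by rewrite exprS; field; rewrite !expf_neq0.
Qed.

Lemma aseq_le_powR n : aseq t n <= (limn (sigma_partial t) `^ t) `^ (t ^+ n).
Proof.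
rewrite powR_le_of_powRV ?aseq_ge0 ?exprn_gt0 // aseq_powRV.
by rewrite ler_powR2r ?(ltW t_gt0) ?sigma_partial_le_lim //
  (le_trans _ (sigma_partial_ge1 t_gt1 n)).
Qed.

Lemma nest_aseq k m : nest t (aseq t) k m.+1 = aseq t k `^ t^-1 * nestB t k m.
Proof.
elim: m k => [|m IH] k /=; first by rewrite addr0 powR1 mulr1.
have nestB_ge0 : 0 <= nestB t k.+1 m by case: m {IH} => *; apply: powR_ge0.
rewrite -/(nest t (aseq t) k.+1 m.+1) IH aseqS powRK ?mulr_ge0 ?aseq_ge0 //.
by rewrite -powRM ?aseq_ge0 ?addr_ge0 ?mulr_ge0 //; congr (_ `^ _); ring.
Qed.

Lemma b_seqE n : b_seq t n.+1 = B_seq t n.+1.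
Proof. by rewrite /b_seq nest_aseq /aseq big_nat1 !powR1 mul1r. Qed.

Lemma b_seq_cvg : cvgn (fun n => b_seq t n.+1).
Proof.
have /cvg_ex[l nest_l] : cvgn (nest t (aseq t) 1).
  apply: (nest_cvg t_gt1 _ (limn (sigma_partial t) `^ t)) => k.
  by rewrite aseq_ge0 aseq_le_powR.
by apply/cvg_ex; exists l; rewrite /b_seq cvg_shiftS.
Qed.

End Aseq.

Theorem corollary25 (R : realType) (t : R) (ht : 1 < t) :
  cvgn (sigma_partial t) /\
  ((fun n => aseq t n `^ (t ^+ n)^-1) @ \oo --> (limn (sigma_partial t)) `^ t) /\
  cvgn (fun n => b_seq t n.+1) /\ cvgn (fun n => B_seq t n.+1) /\
  limn (fun n => b_seq t n.+1) = limn (fun n => B_seq t n.+1).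
Proof.
have sigma_cvg := sigma_partial_cvg ht.
have a_cvg : (fun n => aseq t n `^ (t ^+ n)^-1) @ \oo -->
             limn (sigma_partial t) `^ t.
  rewrite (_ : (fun n => _) = (fun x : R => x `^ t) \o sigma_partial t).
    apply: continuous_cvg sigma_cvg; apply: powR_continuous.
    exact: lt_le_trans ltr01 (lim_sigma_partial_ge1 ht).
  by apply/funext => n; rewrite /= aseq_powRV.
have b_cvg := b_seq_cvg ht.
have B_eq_b : (fun n => B_seq t n.+1) = (fun n => b_seq t n.+1).
  by apply/funext => n; rewrite b_seqE.
by rewrite B_eq_b; do !split.
Qed.
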